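(* Let $(G,S,k)$ be an instance of \textsc{Edge Subset Feedback Vertex Set}, let $T=V(S)$, let $X$ be a dominant solution for $(G,S,k)$, and let $x$ be any vertex of $X_0=X\setminus T$. Then there exist $|X|+2$ paths in $G-S$, each starting in $T$ and ending in $X$, that are pairwise vertex-disjoint except for three of the paths, which all end in $x$ (and share only this vertex). Moreover, these paths can be chosen so that every connected component of $G-X-S$ is intersected by at most one of the paths.
   Context: Graphs are finite and undirected and may contain loops and parallel edges (so cycles of length one and two are allowed). An instance of \textsc{Edge Subset Feedback Vertex Set} is $(G,S,k)$ with $G=(V,E)$, $S\subseteq E$, $k\in\mathbb{N}$. An $S$-cycle is a cycle containing at least one edge of $S$. A solution is a set $X\subseteq V$ with $|X|\le k$ such that $G-X$ contains no $S$-cycle. $V(S)$ denotes the set of vertices incident with at least one edge of $S$. $G-S$ denotes $(V,E\setminus S)$ and $G-X-S$ denotes $(G-X)-S$. A solution $X$ is dominant if it has minimum size among all solutions and, among minimum-size solutions, contains the maximum possible number of vertices of $T=V(S)$. Paths may have length zero (a single vertex). *)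

From mathcomp Require Import all_boot.
Set Implicit Arguments. Unset Strict Implicit. Unset Printing Implicit Defensive.

(* A finite undirected multigraph (loops and parallel edges allowed):
   vertex type V, edge type E, each edge e has endpoints src e and tgt e
   (unordered; a loop has src e = tgt e). *)

Section Graph.
Variables (V E : finType) (src tgt : E -> V).

Definition joins (e : E) (u w : V) : bool :=
  ((src e == u) && (tgt e == w)) || ((src e == w) && (tgt e == u)).

Definition VS (S : {set E}) : {set V} :=
  [set v | [exists e in S, (src e == v) || (tgt e == v)]].

(* A cycle of length n.+1 >= 1: distinct vertices vs 0..n, distinct edges
   es 0..n, edge es i joins vs i and vs (i+1 mod n+1). Length 1 = loop,
   length 2 = two distinct parallel edges. *)
Definition is_cycle n (vs : 'I_n.+1 -> V) (es : 'I_n.+1 -> E) : Prop :=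
  injective vs /\ injective es /\ forall i, joins (es i) (vs i) (vs (ordS i)).

Definition no_S_cycle (S : {set E}) (X : {set V}) : Prop :=
  ~ exists n (vs : 'I_n.+1 -> V) (es : 'I_n.+1 -> E),
      [/\ is_cycle vs es, forall i, vs i \notin X & exists i, es i \in S].

Definition is_solution (S : {set E}) (k : nat) (X : {set V}) : Prop :=
  #|X| <= k /\ no_S_cycle S X.

Definition dominant (S : {set E}) (k : nat) (X : {set V}) : Prop :=
  is_solution S k X /\
  forall Y : {set V}, is_solution S k Y ->
    #|X| <= #|Y| /\ (#|Y| = #|X| -> #|Y :&: VS S| <= #|X :&: VS S|).

Definition adjGS (S : {set E}) : rel V :=
  fun u w => [exists e, (e \notin S) && joins e u w].

Definition adjGXS (S : {set E}) (X : {set V}) : rel V :=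
  fun u w => [&& adjGS S u w, u \notin X & w \notin X].

Definition is_path_GS (S : {set E}) (p : seq V) : bool :=
  if p is v :: s then uniq p && path (adjGS S) v s else false.

End Graph.

From mathcomp Require Import all_boot zify.
Set Implicit Arguments. Unset Strict Implicit. Unset Printing Implicit Defensive.

(* Hall's theorem reduces the linkage to a matching.  List the vertices of X
   with x repeated three times; each entry y must be matched to a distinct
   anchor: y itself if y is in T (a path of length zero), or a component of
   G - X - S that meets T and contains a G - S neighbour of y, through which a
   path from T to y is routed.  Distinct anchors give paths that meet only in X
   and lie in distinct components of G - X - S.  Hall's condition amounts to
   |N(B)| >= |B| + 2 for every nonempty B included in X \ T, where N(B) is the
   set of such components for the vertices of B.  Since G - X has no S-cycle,
   the S-edges outside X link the components of G - X - S like a forest, so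
   some Z included in T \ X with |Z| <= |N(B)| - 1 separates the components of
   N(B) pairwise.  Then (X \ B) together with Z is again a solution, and if
   |N(B)| <= |B| + 1 it would be smaller than X, or as small with more vertices
   in T, contradicting dominance. *)

Section HallMarriage.
Variables (I J : finType) (j0 : J).
Implicit Types (A L C : {set I}) (N : I -> {set J}) (f : I -> J).

Definition matching A N f := {in A &, injective f} /\ {in A, forall i, f i \in N i}.

Definition hall_condition A N :=
  forall L, L \subset A -> #|L| <= #|\bigcup_(i in L) N i|.

Lemma matching0 N f : matching set0 N f.
Proof. by split=> i; rewrite inE. Qed.

Lemma matching_sub A N N' f :
  {in A, forall i, N i \subset N' i} -> matching A N f -> matching A N' f.
Proof. by move=> sN [injf Nf]; split=> // i iA; apply: subsetP (sN i iA) _ (Nf i iA). Qed.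

Lemma matching_glue A L N f1 f2 : L \subset A ->
  matching L N f1 -> matching (A :\: L) (fun i => N i :\: f1 @: L) f2 ->
  matching A N (fun i => if i \in L then f1 i else f2 i).
Proof.
move=> sLA [inj1 N1] [inj2 N2].
have N2D i : i \in A -> i \notin L -> f2 i \in N i /\ f2 i \notin f1 @: L.
  by move=> iA iL; have := N2 i; rewrite !inE iL iA => /(_ isT) /andP[].
split=> [i j iA jA|i iA]; last by case: ifP => iL; [apply: N1 | case: (N2D i iA (negbT iL))].
case: ifP => iL; case: ifP => jL; first exact: inj1.
- by case: (N2D j jA (negbT jL)) => _ /negP nf /esym e; case: nf; rewrite e imset_f.
- by case: (N2D i iA (negbT iL)) => _ /negP nf e; case: nf; rewrite e imset_f.
- by apply: inj2; rewrite inE ?iL ?jL.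
Qed.

Lemma hall_condition_tight A L N : hall_condition A N -> L \subset A ->
  #|\bigcup_(i in L) N i| <= #|L| ->
  hall_condition (A :\: L) (fun i => N i :\: \bigcup_(i in L) N i).
Proof.
move=> hallA sLA tight C sC.
have disjCL : [disjoint C & L].
  rewrite -setI_eq0; apply/eqP/setP=> i; rewrite !inE.
  by apply/andP=> -[/(subsetP sC)]; rewrite inE => /andP[/negP].
have -> : \bigcup_(i in C) (N i :\: \bigcup_(i in L) N i)
          = (\bigcup_(i in C :|: L) N i) :\: \bigcup_(i in L) N i.
  rewrite bigcup_setU setDUl setDv setU0; apply/setP=> j; rewrite inE.
  apply/bigcupP/andP=> [[i iC]|[nL /bigcupP[i iC jN]]]; last by exists i; rewrite // inE nL.
  by rewrite inE => /andP[nL jN]; split=> //; apply/bigcupP; exists i.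
have sLCL : \bigcup_(i in L) N i \subset \bigcup_(i in C :|: L) N i.
  by rewrite bigcup_setU subsetUr.
rewrite cardsD (setIidPr sLCL).
have := hallA (C :|: L); rewrite subUset sLA (subset_trans sC (subsetDl _ _)) => /(_ isT).
rewrite cardsU (disjoint_setI0 disjCL) cards0; lia.
Qed.

Lemma hall_condition_loose A N i0 j1 : i0 \in A ->
  (forall C, C \proper A -> C != set0 -> #|C| < #|\bigcup_(i in C) N i|) ->
  hall_condition (A :\ i0) (fun i => N i :\ j1).
Proof.
move=> i0A loose C sC; have [->|[c cC]] := set_0Vmem C; first by rewrite cards0.
have CA : C \proper A.
  apply/properP; split; first exact: subset_trans sC (subsetDl _ _).
  by exists i0 => //; apply/negP=> /(subsetP sC); rewrite !inE eqxx.
have C0 : C != set0 by apply/set0Pn; exists c.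
have -> : \bigcup_(i in C) (N i :\ j1) = (\bigcup_(i in C) N i) :\ j1.
  apply/setP=> j; rewrite !inE; apply/bigcupP/andP=> [[i iC]|[nj /bigcupP[i iC jN]]].
    by rewrite !inE => /andP[nj jN]; split=> //; apply/bigcupP; exists i.
  by exists i; rewrite // !inE nj.
have := cardsD1 j1 (\bigcup_(i in C) N i); have := loose C CA C0; lia.
Qed.

Lemma hall_matching_in A N : hall_condition A N -> exists f, matching A N f.
Proof.
move: {2}#|A| (leqnn #|A|) => n; elim: n A N => [|n IH] A N szA hallA.
  have -> : A = set0 by apply/eqP; rewrite -cards_eq0; lia.
  by exists (fun _ => j0); apply: matching0.
case: (boolP [exists L : {set I}, [&& L \proper A, L != set0 &
                                    #|\bigcup_(i in L) N i| <= #|L|]]).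
  case/existsP=> L /and3P[LA L0 tight]; have sLA := proper_sub LA.
  have [f1 match1] : exists f, matching L N f.
    apply: IH; first by have := proper_card LA; lia.
    by move=> C sC; apply: hallA; apply: subset_trans sC sLA.
  have [f2 match2] : exists f, matching (A :\: L) (fun i => N i :\: \bigcup_(i in L) N i) f.
    apply: IH (hall_condition_tight hallA sLA tight).
    have := cardsID L A; rewrite (setIidPr sLA); have := card_gt0 L; rewrite L0; lia.
  exists (fun i => if i \in L then f1 i else f2 i); apply: (matching_glue sLA match1).
  apply: matching_sub match2 => i _; apply: setDS; apply/subsetP=> _ /imsetP[j jL ->].
  by apply/bigcupP; exists j => //; case: match1 => _; apply.
move/existsPn=> loose; have [A0|[i0 i0A]] := set_0Vmem A.
  by exists (fun _ => j0); rewrite A0; apply: matching0.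
have [j1 j1N] : exists j, j \in N i0.
  apply/set0Pn; rewrite -card_gt0; have := hallA [set i0].
  by rewrite sub1set i0A cards1 big_set1 => /(_ isT).
have [f2 match2] : exists f, matching (A :\ i0) (fun i => N i :\ j1) f.
  apply: IH; first by have := cardsD1 i0 A; rewrite i0A; lia.
  apply: hall_condition_loose => // C CA C0; have := loose C; rewrite CA C0 /=; lia.
exists (fun i => if i \in [set i0] then j1 else f2 i).
apply: (@matching_glue _ _ _ (fun _ => j1)); rewrite ?sub1set //.
  by split=> [i j|i]; rewrite !inE => /eqP-> //; move=> /eqP->.
by rewrite imset_set1.
Qed.

Lemma hall_marriage N : (forall L, #|L| <= #|\bigcup_(i in L) N i|) ->
  exists f, injective f /\ forall i, f i \in N i.
Proof.
move=> hallN; have [f [injf Nf]] := @hall_matching_in [set: I] N (fun L _ => hallN L).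
by exists f; split=> [i j|i]; [apply: injf | apply: Nf]; rewrite inE.
Qed.

End HallMarriage.

Section Connect.
Variable T : finType.
Implicit Types (R Q : rel T).

Lemma connect_exit R Q (good : pred T) (exit : T -> Prop) a b :
  (forall c d, good c -> R c d -> (Q c d && good d) \/ exit c) ->
  good a -> connect R a b -> connect Q a b \/ exists2 c, connect Q a c & exit c.
Proof.
move=> step ga /connectP[s pth ->]; elim: s a ga pth => [|d s IH] a ga /=; first by left.
case/andP=> Rad pth; case: (step a d ga Rad) => [/andP[Qad gd]|]; last by right; exists a.
have Qad' := connect1 Qad; case: (IH d gd pth) => [c|[c dc exc]].
  by left; apply: connect_trans c.
by right; exists c => //; apply: connect_trans dc.
Qed.

Lemma connect_add_edge R Q p q u w :
  (forall a b, Q a b -> R a b \/ (a = p /\ b = q) \/ (a = q /\ b = p)) ->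
  connect Q u w ->
  connect R u w \/ (connect R u p /\ connect R q w) \/ (connect R u q /\ connect R p w).
Proof.
move=> sQ /connectP[s pth ->]; elim: s u pth => [|d s IH] u /=; first by left.
case/andP=> /sQ + /IH; case=> [/connect1 Rud|[[-> ->]|[-> ->]]]; last 2 first.
- by have := connect0 R p; have := connect0 R q; tauto.
- by have := connect0 R p; have := connect0 R q; tauto.
case => [c|[[c1 c2]|[c1 c2]]].
- by left; apply: connect_trans c.
- by right; left; split=> //; apply: connect_trans c1.
- by right; right; split=> //; apply: connect_trans c1.
Qed.

End Connect.

Section Adjacency.
Variables (V E : finType) (src tgt : E -> V).
Notation joins := (joins src tgt).
Implicit Types (F : {set E}) (D : {set V}).

Definition adj F D : rel V :=
  fun u w => [&& [exists e in F, joins e u w], u \notin D & w \notin D].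

Lemma joinsC e u w : joins e u w = joins e w u.
Proof. by rewrite /joins orbC. Qed.

Lemma joins_ends e u w u' w' : joins e u w -> joins e u' w' ->
  (u = u' /\ w = w') \/ (u = w' /\ w = u').
Proof. by rewrite /joins => /orP[]/andP[/eqP<- /eqP<-] /orP[]/andP[/eqP<- /eqP<-]; tauto. Qed.

Lemma adj_sym F D : symmetric (adj F D).
Proof.
move=> u w; rewrite /adj; congr andb; last by rewrite andbC.
by apply/existsP/existsP=> -[e /andP[eF J]]; exists e; rewrite eF joinsC.
Qed.

Lemma adj_csym F D : connect_sym (adj F D).
Proof. exact/sym_connect_sym/adj_sym. Qed.

Lemma connect_adj_mono F F' D D' : F \subset F' -> D' \subset D ->
  subrel (connect (adj F D)) (connect (adj F' D')).
Proof.
move=> sF sD; apply: connect_sub => u w /and3P[/existsP[e /andP[eF J]] uD wD].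
apply/connect1/and3P; split; last 2 first.
- by apply: contra uD; apply: (subsetP sD).
- by apply: contra wD; apply: (subsetP sD).
by apply/existsP; exists e; rewrite J (subsetP sF).
Qed.

Lemma connect_adj_notin F D a b : connect (adj F D) a b -> a \notin D -> b \notin D.
Proof.
case/connectP=> s pth ->; elim: s a pth => //= c s IH a /andP[/and3P[_ _ cD] pth] _.
exact: IH pth cD.
Qed.

Lemma adj_setU1 e F D a b : adj (e |: F) D a b -> adj F D a b \/ joins e a b.
Proof.
case/and3P=> /existsP[f /andP[/setU1P[->|fF] J]] aD bD; first by right.
by left; apply/and3P; split=> //; apply/existsP; exists f; rewrite fF.
Qed.

Lemma adj_setU1_deleted e F D : (src e \in D) || (tgt e \in D) -> adj (e |: F) D =2 adj F D.
Proof.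
move=> eD a b; apply/idP/idP => [Hab|]; last first.
  by case/and3P=> /existsP[f /andP[fF J]] aD bD; apply/and3P; split=> //;
    apply/existsP; exists f; rewrite J setU1r.
case: (adj_setU1 Hab) => // J; case/and3P: Hab => _ aD bD; move: eD.
by case/orP: J => /andP[/eqP-> /eqP->]; rewrite ?(negbTE aD) ?(negbTE bD).
Qed.

Lemma joins_VS (S : {set E}) e u w :
  e \in S -> joins e u w -> u \in VS src tgt S /\ w \in VS src tgt S.
Proof.
move=> eS J; rewrite !inE; split; apply/existsP; exists e; rewrite eS /=;
  by case/orP: J => /andP[/eqP-> /eqP->]; rewrite eqxx ?orbT.
Qed.

Lemma adjGS_sym S : symmetric (adjGS src tgt S).
Proof.
by move=> u w; apply/existsP/existsP=> -[e /andP[eS J]]; exists e; rewrite eS joinsC.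
Qed.

Lemma adjGXS_adj S X : adjGXS src tgt S X =2 adj (~: S) X.
Proof.
move=> u w; rewrite /adjGXS /adj /adjGS; congr andb.
by apply/existsP/existsP=> -[e H]; exists e; move: H; rewrite inE.
Qed.

End Adjacency.

Section Cycles.
Variables (V E : finType) (src tgt : E -> V).
Notation joins := (joins src tgt).
Notation adj := (adj src tgt).
Implicit Types (F : {set E}) (D : {set V}).

Lemma cycle_of_path F D e p s :
  uniq (p :: s) -> path (adj F D) p s -> p \notin D -> e \notin F ->
  joins e (last p s) p ->
  exists n (vs : 'I_n.+1 -> V) (es : 'I_n.+1 -> E),
    [/\ is_cycle src tgt vs es, forall i, vs i \notin D & exists i, es i = e].
Proof.
move=> U pth pD eF J; set n := size s; exists n.
pose vs (i : 'I_n.+1) := nth p (p :: s) i; exists vs.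
have vs_inj : injective vs.
  by move=> i j /eqP; rewrite /vs nth_uniq // => /eqP/ord_inj.
have vsS (i : 'I_n.+1) : i < n -> vs (ordS i) = nth p (p :: s) i.+1.
  by move=> lt; rewrite /vs /= modn_small.
pose cycle_edge (i : 'I_n.+1) f :=
  if i < n then (f \in F) && joins f (vs i) (vs (ordS i)) else f == e.
have [|es esP] := @fin_all_exists _ (fun=> E) cycle_edge.
  move=> i; rewrite /cycle_edge; case: (ltnP i n) => [lt|_]; last by exists e.
  have /and3P[/existsP[f /andP[fF Jf]] _ _] := pathP p pth i lt.
  by exists f; rewrite fF vsS.
exists es; split; last 2 first.
- by case=> -[|i] lt //; have /and3P[_ _] := pathP p pth i lt.
- by exists ord_max; have := esP ord_max; rewrite /cycle_edge /= ltnn => /eqP.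
split=> //; split=> [i j eij|i]; last first.
  have := esP i; rewrite /cycle_edge; case: ifP => [_ /andP[]//|/negbT].
  rewrite -leqNgt => ni /eqP->.
  have iN : nat_of_ord i = n by have := ltn_ord i; lia.
  have -> : ordS i = ord0 by apply: ord_inj; rewrite /= iN modnn.
  by move: J; rewrite /vs iN (last_nth p).
have := esP i; have := esP j; rewrite /cycle_edge -eij.
case: ifP => jn; case: ifP => ni; first last.
- by move=> _ _; apply: ord_inj; move: jn ni; have := ltn_ord i; have := ltn_ord j; lia.
- by move=> /eqP ei /andP[eiF _]; rewrite -ei eiF in eF.
- by move=> /andP[eiF _] /eqP ei; rewrite -ei eiF in eF.
move=> /andP[_ Jj] /andP[_ Ji]; case: (joins_ends Ji Jj) => [[/vs_inj //]|[]].
by rewrite !vsS // => /eqP + /eqP; rewrite !nth_uniq //; lia.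
Qed.

Lemma S_edge_bridge S D e p q : no_S_cycle src tgt S D -> e \in S ->
  joins e p q -> p \notin D -> ~~ connect (adj [set~ e] D) p q.
Proof.
move=> noC eS J pD; apply/negP => /connectP[s0 pth0 q_last].
move: q_last; case: (shortenP pth0) => s pth U _ q_last.
have eF : e \notin [set~ e] by rewrite !inE eqxx.
have J' : joins e (last p s) p by rewrite -q_last joinsC.
have [n [vs [es [cyc vsD [i ei]]]]] := cycle_of_path U pth pD eF J'.
by apply: noC; exists n, vs, es; split=> //; exists i; rewrite ei.
Qed.

Lemma cycle_connect n (vs : 'I_n.+1 -> V) (es : 'I_n.+1 -> E) D i0 :
  is_cycle src tgt vs es -> (forall i, vs i \notin D) ->
  connect (adj [set~ es i0] D) (vs (ordS i0)) (vs i0).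
Proof.
move=> [_ [es_inj J]] vsD; pose it m := iter m (@ordS n.+1) i0.
have itE m : nat_of_ord (it m) = (i0 + m) %% n.+1.
  elim: m => [|m IH]; first by rewrite addn0 modn_small.
  by rewrite /it iterS /= -/(it m) IH -addn1 modnDml addn1 addnS.
have it_conn m : 0 < m <= n.+1 ->
    connect (adj [set~ es i0] D) (vs (it 1)) (vs (it m)).
  elim: m => [//|[|m] IH /andP[_ le]] //; apply: connect_trans (IH _) _; first by lia.
  apply/connect1/and3P; split=> //; apply/existsP; exists (es (it m.+1)).
  rewrite J !inE andbT; apply/negP=> /eqP/es_inj/(congr1 (@nat_of_ord _)).
  rewrite itE => h; have : (i0 + m.+1) %% n.+1 == i0 %% n.+1 by rewrite h modn_small.
  by rewrite -[X in _ == X %% _]addn0 eqn_modDl mod0n modn_small //; lia.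
have -> : vs i0 = vs (it n.+1) by congr vs; apply: ord_inj; rewrite itE modnDr modn_small.
by apply: it_conn; lia.
Qed.

End Cycles.

Section Separation.
Variables (V E : finType) (src tgt : E -> V) (S : {set E}) (X : {set V}).
Hypothesis noC : no_S_cycle src tgt S X.
Notation joins := (joins src tgt).
Notation adj := (adj src tgt).
Notation T := (VS src tgt S).
Notation R0 := (adj (~: S) X).
Implicit Types (F : {set E}) (K Z : {set V}).

Definition classes F K := [set root (adj F X) r | r in K].

Definition separated F Z K := forall u w,
  u \notin X :|: Z -> w \notin X :|: Z -> root R0 u \in K -> root R0 w \in K ->
  root R0 u != root R0 w -> ~~ connect (adj F (X :|: Z)) u w.

Lemma root_adj_mono F F' u :
  F \subset F' -> root (adj F' X) (root (adj F X) u) = root (adj F' X) u.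
Proof.
move=> sF; apply/esym/(rootP (adj_csym _ _ _ _)).
exact: connect_adj_mono (connect_root _ u).
Qed.

Lemma classes_mono F F' K :
  F \subset F' -> classes F' K = [set root (adj F' X) r | r in classes F K].
Proof. by move=> sF; rewrite -imset_comp; apply: eq_imset => u /=; rewrite root_adj_mono. Qed.

Lemma classes_setU1_deleted F e K :
  (src e \in X) || (tgt e \in X) -> classes (e |: F) K = classes F K.
Proof. by move=> eX; apply: eq_imset; apply: eq_root; apply: adj_setU1_deleted. Qed.

Lemma separated_setU1_deleted F e Z K : (src e \in X) || (tgt e \in X) ->
  separated F Z K -> separated (e |: F) Z K.
Proof.
move=> eX sep u w uZ wZ uK wK ne.
have eXZ : (src e \in X :|: Z) || (tgt e \in X :|: Z).
  by case/orP: eX => eX; rewrite !inE eX ?orbT.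
by rewrite (eq_connect (adj_setU1_deleted F eXZ)) sep.
Qed.

Lemma separated_setU1_cut F e Z K : separated F Z K -> separated (e |: F) (src e |: Z) K.
Proof.
move=> sep u w uZ wZ uK wK ne.
have XZ a : a \notin X :|: (src e |: Z) -> a \notin X :|: Z.
  by apply: contra; rewrite !inE => /orP[]->; rewrite ?orbT.
apply: contraNN (sep u w (XZ u uZ) (XZ w wZ) uK wK ne) => c.
have eD : (src e \in X :|: (src e |: Z)) || (tgt e \in X :|: (src e |: Z)).
  by rewrite !inE eqxx !orbT.
have sD : X :|: Z \subset X :|: (src e |: Z) by rewrite setUS // subsetUr.
apply: (connect_adj_mono (subxx F) sD).
by rewrite -(eq_connect (adj_setU1_deleted F eD)).
Qed.

Lemma separated_setU1_loose F e Z K : ~: S \subset F ->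
  ~~ ((root (adj F X) (src e) \in classes F K) && (root (adj F X) (tgt e) \in classes F K)) ->
  separated F Z K -> separated (e |: F) Z K.
Proof.
move=> SF notboth sep u w uZ wZ uK wK ne; apply/negP=> c.
have toF a b : connect (adj F (X :|: Z)) a b -> root (adj F X) a = root (adj F X) b.
  move=> ab; apply/(rootP (adj_csym _ _ _ _)).
  by apply: connect_adj_mono ab; rewrite ?subsetUl.
have inK a : root R0 a \in K -> root (adj F X) a \in classes F K.
  by move=> aK; apply/imsetP; exists (root R0 a); rewrite ?root_adj_mono.
have step a b : adj (e |: F) (X :|: Z) a b ->
    adj F (X :|: Z) a b \/ (a = src e /\ b = tgt e) \/ (a = tgt e /\ b = src e).
  by case/adj_setU1=> [|/joins_ends J]; [left | right; apply: J; rewrite /joins !eqxx].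
case: (connect_add_edge step c) => [|[[c1 c2]|[c1 c2]]].
- by apply/negP: (sep u w uZ wZ uK wK ne).
- by move/negP: notboth; apply; rewrite -(toF _ _ c1) (toF _ _ c2) !inK.
- by move/negP: notboth; apply; rewrite andbC -(toF _ _ c1) (toF _ _ c2) !inK.
Qed.

Lemma card_classes_setU1_merge F e K : src e \notin X -> tgt e \notin X ->
  root (adj F X) (src e) \in classes F K -> root (adj F X) (tgt e) \in classes F K ->
  root (adj F X) (src e) != root (adj F X) (tgt e) ->
  #|classes (e |: F) K| < #|classes F K|.
Proof.
set rp := root _ (src e); set rq := root _ (tgt e) => pX qX rpC rqC ne.
have liftF a b : connect (adj F X) a b -> connect (adj (e |: F) X) a b.
  exact: connect_adj_mono (subsetUr _ _) (subxx X) a b.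
have rqp : connect (adj (e |: F) X) rq rp.
  apply: (@connect_trans _ _ (tgt e)); first by rewrite adj_csym; apply/liftF/connect_root.
  apply: (@connect_trans _ _ (src e)); last exact/liftF/connect_root.
  apply/connect1/and3P; split=> //; apply/existsP; exists e.
  by rewrite setU11 /joins !eqxx orbT.
rewrite (classes_mono K (subsetUr _ F)).
have -> : [set root (adj (e |: F) X) r | r in classes F K]
        = [set root (adj (e |: F) X) r | r in classes F K :\ rq].
  apply/setP=> y; apply/imsetP/imsetP=> -[r rC ->]; last first.
    by exists r => //; move: rC; rewrite inE => /andP[].
  have [-> |nr] := eqVneq r rq; last by exists r; rewrite // in_setD1 nr.
  by exists rp; [rewrite in_setD1 ne rpC | apply/(rootP (adj_csym _ _ _ _))].
by rewrite [in X in _ < X](cardsD1 rq) rqC add1n ltnS leq_imset_card.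
Qed.

Lemma separation_step F e K Z : ~: S \subset F -> Z \subset T :\: X ->
  #|Z| + #|classes F K| <= #|K| -> separated F Z K ->
  exists Z', [/\ Z' \subset T :\: X, #|Z'| + #|classes (e |: F) K| <= #|K|
               & separated (e |: F) Z' K].
Proof.
move=> SF ZT cardZ sep; have [eF|eF] := boolP (e \in F).
  by exists Z; rewrite (setUidPr _) ?sub1set.
have eS : e \in S by apply: contraR eF => eS; apply: (subsetP SF); rewrite inE.
have [eX|] := boolP ((src e \in X) || (tgt e \in X)).
  by exists Z; rewrite classes_setU1_deleted //; split=> //; apply: separated_setU1_deleted.
rewrite negb_or => /andP[pX qX]; have J : joins e (src e) (tgt e) by rewrite /joins !eqxx.
have ne : root (adj F X) (src e) != root (adj F X) (tgt e).
  apply: contra (S_edge_bridge noC eS J pX) => /eqP/(rootP (adj_csym _ _ _ _)).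
  apply: connect_adj_mono => //; apply/subsetP=> f fF; rewrite !inE.
  by apply: contraNneq eF => <-.
have [/andP[rpC rqC]|notboth] := boolP ((root (adj F X) (src e) \in classes F K)
                                       && (root (adj F X) (tgt e) \in classes F K)).
  exists (src e |: Z); split; last exact: separated_setU1_cut.
    by rewrite subUset ZT sub1set in_setD pX andbT; case: (joins_VS eS J) => ->.
  by have := card_classes_setU1_merge pX qX rpC rqC ne; have := cardsU1 (src e) Z; lia.
exists Z; split=> //; last exact: separated_setU1_loose.
rewrite (classes_mono K (subsetUr _ F)); apply: leq_trans cardZ.
by rewrite leq_add2l leq_imset_card.
Qed.

(* Invariant while the S-edges are added one by one: an edge joining two
   classes of K costs one vertex of Z but merges the two classes; that they
   were distinct is where the absence of S-cycles in G - X is used. *)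
Lemma separation_edges K (s : seq E) : exists Z,
  [/\ Z \subset T :\: X, #|Z| + #|classes (~: S :|: [set:: s]) K| <= #|K|
    & separated (~: S :|: [set:: s]) Z K].
Proof.
elim: s => [|e s [Z [ZT cardZ sep]]]; last first.
  by rewrite set_cons setUCA; apply: separation_step ZT cardZ sep; apply: subsetUl.
rewrite set_nil setU0; exists set0; split; rewrite ?sub0set ?cards0 ?leq_imset_card //.
by move=> u w _ _ _ _; apply: contra; rewrite setU0 => /(rootP (adj_csym _ _ _ _))->.
Qed.

Lemma separation K : exists Z,
  [/\ Z \subset T :\: X, #|Z| <= #|K|.-1 & separated setT Z K].
Proof.
have [Z [ZT cardZ sep]] := separation_edges K (enum S).
have FT : ~: S :|: [set:: enum S] = setT by apply/setP=> f; rewrite !inE mem_enum orNb.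
rewrite FT in cardZ sep; exists Z; split=> //.
have [K0|[r rK]] := set_0Vmem K; first by move: cardZ; rewrite K0 /classes imset0 cards0; lia.
have : 0 < #|classes setT K|.
  by rewrite card_gt0; apply/set0Pn; exists (root (adj setT X) r); apply: imset_f.
by move: cardZ; lia.
Qed.

End Separation.

Section Reroute.
Variables (V E : finType) (src tgt : E -> V) (S : {set E}) (X : {set V}).
Hypothesis noC : no_S_cycle src tgt S X.
Notation joins := (joins src tgt).
Notation adj := (adj src tgt).
Notation T := (VS src tgt S).
Notation R0 := (adj (~: S) X).

Definition nbr_comps (y : V) : {set V} := [set root R0 v | v in
  [set v | [&& v \notin X, adjGS src tgt S y v & [exists t in T, connect R0 v t]]]].

Lemma component_meets_T u q : q \in T -> connect (adj setT X) u q ->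
  exists2 t, t \in T & connect R0 u t.
Proof.
move=> qT uq.
have step a b : predT a -> adj setT X a b -> (R0 a b && predT b) \/ a \in T.
  move=> _ /and3P[/existsP[f /andP[_ J]] aX bX]; have [fS|fS] := boolP (f \in S).
    by right; case: (joins_VS fS J).
  left; apply/andP; split=> //; apply/and3P; split=> //.
  by apply/existsP; exists f; rewrite inE fS.
have [uq'|[t ut tT]] := connect_exit step isT uq; [by exists q | by exists t].
Qed.

Lemma adjGS_notin_VS f u b : joins f u b -> b \notin T -> adjGS src tgt S b u.
Proof.
move=> J bT; apply/existsP; exists f; rewrite joinsC J andbT.
by apply: contra bT => fS; case: (joins_VS fS J).
Qed.

Variable B : {set V}.
Hypothesis BT : [disjoint B & T].

Lemma VS_notin_B v : v \in T -> v \notin B.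
Proof. by move=> vT; apply/negP=> vB; rewrite (disjointFr BT vB) in vT. Qed.

Lemma exit_to_B (Z : {set V}) e a b : a \in T -> a \notin X :|: Z ->
  connect (adj [set~ e] (X :\: B :|: Z)) a b ->
  connect (adj [set~ e] (X :|: Z)) a b \/
  exists u, [/\ connect (adj [set~ e] (X :|: Z)) a u, u \notin X :|: Z
              & root R0 u \in \bigcup_(b in B) nbr_comps b].
Proof.
move=> aT aXZ ab.
have step c d : c \notin B -> adj [set~ e] (X :\: B :|: Z) c d ->
    (adj [set~ e] (X :|: Z) c d && (d \notin B)) \/
    (exists2 b, b \in B & adj [set~ e] (X :\: B :|: Z) c b).
  move=> cB /and3P[ex cY dY]; have [dB|dB] := boolP (d \in B).
    by right; exists d => //; apply/and3P.
  left; rewrite andbT; apply/and3P; split=> //.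
  - by apply: contra cY; rewrite !inE cB => /orP[]->; rewrite ?orbT.
  - by apply: contra dY; rewrite !inE dB => /orP[]->; rewrite ?orbT.
have [|[u au [y yB uy]]] := connect_exit step (VS_notin_B aT) ab; first by left.
right; exists u; have uXZ := connect_adj_notin au aXZ; split=> //.
have uX : u \notin X by apply: contra uXZ; rewrite inE => ->.
case/and3P: uy => /existsP[f /andP[_ Jf]] _ _.
apply/bigcupP; exists y => //; apply/imsetP; exists u => //; rewrite inE uX.
rewrite (adjGS_notin_VS Jf) ?(disjointFr BT yB) //=.
have [|t tT ut] := component_meets_T aT (u := u); last by apply/existsP; exists t; rewrite tT.
by rewrite adj_csym; apply: connect_adj_mono au; rewrite ?subsetT ?subsetUl.
Qed.

Lemma solution_without_B : exists Z : {set V},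
  [/\ Z \subset T :\: X, #|Z| <= #|\bigcup_(b in B) nbr_comps b|.-1
    & no_S_cycle src tgt S (X :\: B :|: Z)].
Proof.
have [Z [ZT cardZ sep]] := separation noC (\bigcup_(b in B) nbr_comps b).
exists Z; split=> // -[n [vs [es [cyc vsY [i0 eS]]]]].
set e := es i0 in eS; set p := vs i0; set q := vs (ordS i0).
have J : joins e p q by case: cyc => _ [_]; apply.
have [pT qT] := joins_VS eS J.
have notXZ v : v \in T -> v \notin X :\: B :|: Z -> v \notin X :|: Z.
  by move=> vT; apply: contra; rewrite !inE (VS_notin_B vT) => /orP[]->; rewrite ?orbT.
have pXZ := notXZ p pT (vsY i0); have qXZ := notXZ q qT (vsY (ordS i0)).
have pX : p \notin X by apply: contra pXZ; rewrite inE => ->.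
have npq := S_edge_bridge noC eS J pX.
have lift a b : connect (adj [set~ e] (X :|: Z)) a b -> connect (adj [set~ e] X) a b.
  exact: connect_adj_mono (subxx _) (subsetUl _ _) a b.
have qp : connect (adj [set~ e] (X :\: B :|: Z)) q p := cycle_connect i0 cyc vsY.
have [qp'|[u [qu uXZ uK]]] := exit_to_B qT qXZ qp.
  by rewrite adj_csym (lift _ _ qp') in npq.
have pq : connect (adj [set~ e] (X :\: B :|: Z)) p q by rewrite adj_csym.
have [pq'|[w [pw wXZ wK]]] := exit_to_B pT pXZ pq.
  by rewrite (lift _ _ pq') in npq.
have ne : root R0 u != root R0 w.
  apply: contra npq => /eqP/(rootP (adj_csym _ _ _ _)) uw.
  apply: (connect_trans (lift _ _ pw)); rewrite adj_csym.
  apply: (connect_trans (lift _ _ qu)); apply: connect_adj_mono uw => //.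
  by apply/subsetP=> f; rewrite !inE; apply: contraNneq => ->.
apply: (negP (sep u w uXZ wXZ uK wK ne)).
have liftT a b : connect (adj [set~ e] (X :|: Z)) a b -> connect (adj setT (X :|: Z)) a b.
  exact: connect_adj_mono (subsetT _) (subxx _) a b.
apply: (@connect_trans _ _ q); first by rewrite adj_csym; apply: liftT.
apply: (@connect_trans _ _ p); last exact: liftT.
by apply/connect1/and3P; split=> //; apply/existsP; exists e; rewrite inE joinsC J.
Qed.

End Reroute.

Lemma dominant_nbr_comps (V E : finType) (src tgt : E -> V) (S : {set E}) k
    (X B : {set V}) : dominant src tgt S k X -> B \subset X :\: VS src tgt S ->
  B != set0 -> #|B|.+2 <= #|\bigcup_(b in B) nbr_comps src tgt S X b|.
Proof.
set T := VS src tgt S => -[[Xk noC] minX] BXT B0.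
have BX : B \subset X by apply: subset_trans BXT (subsetDl _ _).
have BT : [disjoint B & T].
  rewrite disjoint_subset; apply: subset_trans BXT _.
  by apply/subsetP=> v; rewrite in_setD => /andP[].
have [Z [ZT cardZ noCY]] := solution_without_B noC BT.
set Y := X :\: B :|: Z in noCY.
have ZX v : v \in Z -> v \in T /\ v \notin X by move/(subsetP ZT); rewrite in_setD => /andP[].
have cardY : #|Y| <= #|X| - #|B| + #|Z|.
  by rewrite -(setIidPr BX) -cardsD; apply: leq_card_setU.
have cardYT : #|X :&: T| + #|Z| <= #|Y :&: T|.
  have XTZ : X :&: T :&: Z = set0.
    apply/setP=> v; rewrite in_set0 !in_setI.
    by apply/negP=> /andP[/andP[vX _] /ZX[_]]; rewrite vX.
  rewrite -(cardsUI (X :&: T) Z) XTZ cards0 addn0; apply/subset_leq_card/subsetP=> v.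
  rewrite /Y in_setU !in_setI in_setU in_setD => /orP[/andP[vX vT]|vZ].
    by rewrite vX vT (VS_notin_B BT vT).
  by case: (ZX v vZ) => vT _; rewrite vZ vT orbT.
rewrite leqNgt; apply/negP=> small.
have cB : 0 < #|B| <= #|X| by rewrite card_gt0 B0 subset_leq_card.
have YX : #|Y| <= #|X| by lia.
have [leXY tie] := minX Y (conj (leq_trans YX Xk) noCY).
have eqY : #|Y| = #|X| by lia.
by have := tie eqY; rewrite -/T; lia.
Qed.

Section Targets.
Variables (V : finType) (X : {set V}) (x : V).
Hypothesis xX : x \in X.
Implicit Types (i j : 'I_#|X|.+2).

(* The indices [#|X|] and [#|X|.+1] fall outside [enum X], so [nth] returns
   the default x there: x is listed three times. *)
Definition target (i : 'I_#|X|.+2) : V := nth x (enum X) i.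

Definition slot_x : 'I_#|X|.+2 := inord (index x (enum X)).
Definition slot_b : 'I_#|X|.+2 := inord #|X|.
Definition slot_c : 'I_#|X|.+2 := inord #|X|.+1.

Lemma target_in i : target i \in X.
Proof.
rewrite /target; have [lt|ge] := ltnP i (size (enum X)); first by rewrite -mem_enum mem_nth.
by rewrite nth_default.
Qed.

Lemma target_hi i : #|X| <= i -> target i = x.
Proof. by move=> ge; rewrite /target nth_default -?cardE. Qed.

Lemma target_lo_inj i j : i < #|X| -> j < #|X| -> target i = target j -> i = j.
Proof.
move=> lti ltj /eqP; rewrite /target nth_uniq -?cardE ?enum_uniq //.
by move/eqP/ord_inj.
Qed.

Lemma index_x_lt : index x (enum X) < #|X|.
Proof. by rewrite cardE index_mem mem_enum. Qed.

Lemma target_slots : [/\ target slot_x = x, target slot_b = x & target slot_c = x].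
Proof.
have lt := index_x_lt.
split; last 2 first.
- by rewrite target_hi // inordK.
- by rewrite target_hi // inordK.
by rewrite /target inordK ?nth_index ?mem_enum //; lia.
Qed.

Lemma slots_neq : [/\ slot_x != slot_b, slot_b != slot_c & slot_x != slot_c].
Proof.
have lt := index_x_lt.
by split; apply/eqP=> /(congr1 (@nat_of_ord _)); rewrite !inordK //; lia.
Qed.

Lemma slots_hi i : #|X| <= i -> (i == slot_b) || (i == slot_c).
Proof.
move=> hi; have := ltn_ord i; rewrite ltnS leq_eqVlt => /orP[/eqP|] e; apply/orP;
  [right | left]; apply/eqP/ord_inj; rewrite inordK //; lia.
Qed.

Lemma target_eq_x i : target i = x -> i \in [:: slot_x; slot_b; slot_c].
Proof.
rewrite !inE => tx; have [lo|/slots_hi->] := ltnP i #|X|; last by rewrite orbT.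
have lt := index_x_lt; apply/orP; left; apply/eqP/ord_inj; rewrite inordK; last by lia.
by rewrite -tx index_uniq -?cardE ?enum_uniq.
Qed.

Lemma target_inj_x i j : target i = target j -> i != j -> target i = x.
Proof.
move=> tij ne; have [lti|/target_hi//] := ltnP i #|X|.
have [ltj|/target_hi] := ltnP j #|X|; last by rewrite tij.
by rewrite (target_lo_inj lti ltj tij) eqxx in ne.
Qed.

Lemma card_le_targets (L : {set 'I_#|X|.+2}) :
  #|L| <= #|target @: L| + 2 * (x \in target @: L).
Proof.
pose H := [set i : 'I_#|X|.+2 | #|X| <= i].
have lo : #|L :\: H| <= #|target @: L|.
  rewrite -(card_in_imset (f := target)); first exact/subset_leq_card/imsetS/subsetDl.
  by move=> i j; rewrite !inE -!ltnNge => /andP[lti _] /andP[ltj _]; apply: target_lo_inj.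
have hi : #|L :&: H| <= 2 * (x \in target @: L).
  have [xL|xL] := boolP (x \in target @: L).
    apply: (leq_trans (subset_leq_card (subsetIr L H))).
    have H2 : H \subset [set slot_b; slot_c] by apply/subsetP=> i; rewrite !inE => /slots_hi.
    by apply: (leq_trans (subset_leq_card H2)); rewrite cards2; lia.
  rewrite muln0 leqn0 cards_eq0; apply/eqP/setP=> i; rewrite !inE.
  by apply/negP=> /andP[iL /target_hi tx]; case/negP: xL; rewrite -tx imset_f.
by rewrite -(cardsID H L) addnC leq_add.
Qed.

End Targets.

Section Linkage.
Variables (V E : finType) (src tgt : E -> V) (S : {set E}) (X : {set V}) (x : V).
Notation adj := (adj src tgt).
Notation T := (VS src tgt S).
Notation R0 := (adj (~: S) X).
Notation nbr_comps := (nbr_comps src tgt S X).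

Definition anchors (y : V) : {set V} := (if y \in T then [set y] else set0) :|: nbr_comps y.

Lemma nbr_comps_notin y r : r \in nbr_comps y -> r \notin X.
Proof.
by case/imsetP=> v; rewrite inE => /andP[vX _] ->; apply: connect_adj_notin (connect_root _ v) vX.
Qed.

Lemma hall_condition_targets k : dominant src tgt S k X -> x \in X :\: T ->
  forall L : {set 'I_#|X|.+2}, #|L| <= #|\bigcup_(i in L) anchors (target x i)|.
Proof.
move=> dom /setDP[xX xT] L; set A := target x @: L; set B := A :\: T.
have AX : A \subset X by apply/subsetP=> _ /imsetP[i _ ->]; apply: target_in.
have cover : #|A :&: T| + #|\bigcup_(b in B) nbr_comps b|
             <= #|\bigcup_(i in L) anchors (target x i)|.
  have disj : A :&: T :&: \bigcup_(b in B) nbr_comps b = set0.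
    apply/setP=> r; rewrite in_set0 !in_setI; apply/negP.
    by case/andP=> /andP[rA _] /bigcupP[b _ /nbr_comps_notin]; rewrite (subsetP AX r rA).
  rewrite -(cardsUI (A :&: T)) disj cards0 addn0; apply/subset_leq_card/subsetP=> r.
  case/setUP=> [/setIP[/imsetP[i iL ->] rT]|/bigcupP[b /setDP[/imsetP[i iL ->] _] rN]];
    by apply/bigcupP; exists i; rewrite // /anchors ?rT inE ?set11 ?rN ?orbT.
have cardA : #|A| = #|A :&: T| + #|B| by rewrite cardsID.
have := card_le_targets xX L; rewrite -/A.
have [B0|B0] := eqVneq B set0.
  have xA : (x \in A) = false.
    apply/negP=> xA; have : x \in B by rewrite in_setD xT.
    by rewrite B0 inE.
  by rewrite xA; rewrite B0 cards0 in cardA; lia.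
have := dominant_nbr_comps dom (setSD T AX) B0; rewrite -/B; lia.
Qed.

Definition route (y r : V) (s : seq V) :=
  [/\ is_path_GS src tgt S s, head x s \in T, last x s = y,
      {in s, forall v, v \in X -> v = y} & {in s, forall v, v \notin X -> root R0 v = r}].

Lemma route_exists y r : y \in X -> r \in anchors y -> exists s, route y r s.
Proof.
move=> yX; case/setUP.
  case: ifP => yT; last by rewrite inE.
  move/set1P=> ->; exists [:: y]; split=> // v; rewrite inE => /eqP-> //.
  by rewrite yX.
case/imsetP=> v; rewrite inE => /and3P[vX yv /existsP[t /andP[tT vt]]] ->.
have tX := connect_adj_notin vt vX.
have /connectP[s0 pth0] : connect R0 t v by rewrite adj_csym.
case: (shortenP pth0) => s pth U _ v_last.
have on_s z : z \in t :: s -> z \notin X /\ root R0 z = root R0 v.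
  move=> zs; have tz := path_connect pth zs; split; first exact: connect_adj_notin tz tX.
  by apply/(rootP (adj_csym _ _ _ _)); rewrite adj_csym; apply: connect_trans vt tz.
exists (rcons (t :: s) y); split=> //; last 3 first.
- by rewrite last_rcons.
- by move=> z; rewrite mem_rcons inE => /orP[/eqP//|/on_s[/negPf->]].
- by move=> z; rewrite mem_rcons inE => /orP[/eqP->|/on_s[_ ->]]; rewrite ?yX.
change (uniq (rcons (t :: s) y) && path (adjGS src tgt S) t (rcons s y)).
rewrite rcons_uniq U andbT rcons_path -v_last adjGS_sym yv andbT.
apply/andP; split; first by apply/negP=> /on_s[]; rewrite yX.
apply: sub_path pth => a b /and3P[/existsP[f /andP[fS J]] _ _].
by apply/existsP; exists f; rewrite J andbT; move: fS; rewrite inE.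
Qed.

Section TwoRoutes.
Variables (y1 y2 r1 r2 : V) (s1 s2 : seq V).
Hypotheses (route1 : route y1 r1 s1) (route2 : route y2 r2 s2) (r12 : r1 != r2).

Lemma routes_meet v : v \in s1 -> v \in s2 -> v = y1 /\ v = y2.
Proof.
case: route1 route2 => _ _ _ X1 R1 [_ _ _ X2 R2] vs1 vs2; have [vX|vX] := boolP (v \in X).
  by rewrite -{1}(X1 v vs1 vX) (X2 v vs2 vX).
by move: r12; rewrite -(R1 v vs1 vX) -(R2 v vs2 vX) eqxx.
Qed.

Lemma routes_apart u w : u \in s1 -> w \in s2 -> u \notin X -> w \notin X ->
  ~~ connect R0 u w.
Proof.
case: route1 route2 => _ _ _ _ R1 [_ _ _ _ R2] us1 ws2 uX wX.
by apply: contra r12 => /(rootP (adj_csym _ _ _ _)); rewrite R1 // R2 // => ->.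
Qed.

End TwoRoutes.

End Linkage.

Theorem lemma4 (V E : finType) (src tgt : E -> V) (S : {set E}) (k : nat)
  (X : {set V}) (x : V) :
  dominant src tgt S k X ->
  x \in X :\: VS src tgt S ->
  exists (P : 'I_(#|X|.+2) -> seq V) (a b c : 'I_(#|X|.+2)),
    (forall i, is_path_GS src tgt S (P i)) /\
    (forall i, head x (P i) \in VS src tgt S) /\
    (forall i, last x (P i) \in X) /\
    (a != b /\ b != c /\ a != c) /\
    (last x (P a) = x /\ last x (P b) = x /\ last x (P c) = x) /\
    (forall i j v, i != j -> v \in P i -> v \in P j ->
       v = x /\ i \in [:: a; b; c] /\ j \in [:: a; b; c]) /\
    (forall i j u w, i != j -> u \in P i -> w \in P j ->
       u \notin X -> w \notin X -> ~~ connect (adjGXS src tgt S X) u w).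
Proof.
move=> dom xXT; have xX : x \in X by case/setDP: xXT.
have [f [f_inj f_anchors]] := hall_marriage x (hall_condition_targets dom xXT).
have [P routeP] := @fin_all_exists _ (fun=> seq V)
  (fun i => route src tgt S X x (target x i) (f i))
  (fun i => route_exists x (target_in xX i) (f_anchors i)).
have f_neq i j : i != j -> f i != f j by apply: contra => /eqP/f_inj->.
have lastP i : last x (P i) = target x i by case: (routeP i).
have [ta tb tc] := target_slots xX; have [nab nbc nac] := slots_neq xX.
exists P, (slot_x X x), (slot_b X), (slot_c X).
split; first by move=> i; case: (routeP i).
split; first by move=> i; case: (routeP i).
split; first by move=> i; rewrite lastP target_in.
split; first by [].
split; first by rewrite !lastP.
split=> [i j v ij vi vj | i j u w ij ui wj uX wX].
  have [vi' vj'] := routes_meet (routeP i) (routeP j) (f_neq _ _ ij) vi vj.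
  have tx : target x i = x by apply: target_inj_x ij; rewrite -vi' -vj'.
  by rewrite vi' tx !target_eq_x // -vj' vi' tx.
rewrite (eq_connect (adjGXS_adj _ _ _ _)).
exact: (routes_apart (routeP i) (routeP j) (f_neq _ _ ij) ui wj uX wX).
Qed.
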